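(* Let $d\geq 2$, let $\mathcal S$ be the set of $d\times d$ density operators, and let $\mathrm d\rho$ be any probability measure on $\mathcal S$. Define $$B_1=1-\tfrac14\,\mathrm{Tr}\big(\mathbb E_\rho[\rho^2]-\mathbb E_\rho[\rho]^2\big),\qquad B_2=\frac1d\left(1+\sqrt{d-1}\,\sqrt{d\left(\mathbb E_\rho\Big[\sqrt{1-\mathrm{Tr}(\rho^2)}\Big]^2+\mathrm{Tr}\big(\mathbb E_\rho[\rho]^2\big)\right)-1}\right).$$ Then either $B_1=1$, or $B_2<B_1$.
   Context: $\mathbb E_\rho$ denotes expectation with respect to $\mathrm d\rho$. ($B_1$ and $B_2$ are both upper bounds on $\max_{\sigma\in\mathcal S}\mathbb E_\rho[F(\rho,\sigma)]$, $F$ being the fidelity.) *)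

From HB Require Import structures.
From mathcomp Require Import all_boot all_order all_algebra.
From mathcomp Require Import all_classical all_reals all_analysis.
From mathcomp Require Import complex.
Set Implicit Arguments. Unset Strict Implicit. Unset Printing Implicit Defensive.
Import Order.TTheory GRing.Theory Num.Theory.
Local Open Scope ring_scope.

Definition adjmx (R : realType) (m n : nat) (A : 'M[R[i]]_(m, n)) : 'M[R[i]]_(n, m) :=
  (map_mx Num.conj A)^T.

(* Positive semidefinite: v^* A v >= 0 for every vector v (the order on
   R[i] forces the value to be real). *)
Definition psd (R : realType) (d : nat) (A : 'M[R[i]]_d) : Prop :=
  forall v : 'cV[R[i]]_d, 0 <= (adjmx v *m A *m v) 0 0.

Definition density_ops (R : realType) (d : nat) : set 'M[R[i]]_d :=
  [set A | psd A /\ \tr A = 1].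

Definition Ec (R : realType) (dT : measure_display) (T : measurableType dT)
  (P : probability T R) (f : T -> R[i]) : R[i] :=
  Complex (Rintegral P setT (fun t => complex.Re (f t)))
          (Rintegral P setT (fun t => complex.Im (f t))).

Definition Emx (R : realType) (dT : measure_display) (T : measurableType dT)
  (P : probability T R) (d : nat) (F : T -> 'M[R[i]]_d) : 'M[R[i]]_d :=
  \matrix_(i, j) Ec P (fun t => F t i j).

Definition B1 (R : realType) (dT : measure_display) (T : measurableType dT)
  (P : probability T R) (d : nat) (rho : T -> 'M[R[i]]_d) : R[i] :=
  1 - 4%:R^-1 * \tr (Emx P (fun t => rho t *m rho t) - Emx P rho *m Emx P rho).

Definition B2 (R : realType) (dT : measure_display) (T : measurableType dT)
  (P : probability T R) (d : nat) (rho : T -> 'M[R[i]]_d) : R[i] :=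
  d%:R^-1 * (1 + sqrtC (d.-1)%:R *
    sqrtC (d%:R * ((Ec P (fun t => sqrtC (1 - \tr (rho t *m rho t)))) ^+ 2
                   + \tr (Emx P rho *m Emx P rho)) - 1)).

From HB Require Import structures.
From mathcomp Require Import all_boot all_order all_algebra.
From mathcomp Require Import all_classical all_reals all_analysis.
From mathcomp Require Import complex.
From mathcomp Require Import measurable_realfun.
From mathcomp Require Import ring lra.
Import Order.TTheory GRing.Theory Num.Theory.
Local Open Scope ring_scope.
Set Implicit Arguments. Unset Strict Implicit.

(* Write [p rho] for the purity [Tr rho^2] of a state, [E[.]] for the
   expectation over the ensemble, and [a = E[sqrt (1 - p rho)]].  Then
   - [Tr (E rho)^2 >= 1/d], by Cauchy-Schwarz on the diagonal of the unit-trace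
     matrix [E rho];
   - [Tr (E rho)^2 <= E[p rho]], by Jensen ([E[x]^2 <= E[x^2]]) applied to the
     real and imaginary parts of every entry;
   - [a^2 <= E[1 - p rho]], by Jensen again.
   With [x = a^2 + Tr (E rho)^2 <= 1], AM-GM bounds
   [B2 = (1 + sqrt (d - 1) sqrt (d x - 1)) / d] by [(1 + x) / 2], while
   [1 - B1 = (E[p rho] - Tr (E rho)^2) / 4 <= (1 - x) / 4].  Hence
   [B2 <= (1 + x) / 2 < 1 - (1 - x) / 4 <= B1] unless [x = 1], and [x = 1]
   forces [B1 = 1]. *)

Section bounded_measurable.
Context (R : realType) (dT : measure_display) (T : measurableType dT).
Implicit Types f g : T -> R.

Definition bounded_measurable f :=
  measurable_fun setT f /\ exists M : R, forall t, `|f t| <= M.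

Lemma bounded_measurable_cst (c : R) : bounded_measurable (fun=> c).
Proof. by split; [exact: measurable_cst | exists `|c|]. Qed.

Lemma bounded_measurableD f g : bounded_measurable f -> bounded_measurable g ->
  bounded_measurable (fun t => f t + g t).
Proof.
move=> [mf [M hM]] [mg [N hN]]; split; first exact: measurable_funD.
by exists (M + N) => t; apply: le_trans (ler_normD _ _) _; exact: lerD.
Qed.

Lemma bounded_measurableN f : bounded_measurable f ->
  bounded_measurable (fun t => - f t).
Proof.
move=> [mf [M hM]]; split; first exact: measurableT_comp.
by exists M => t; rewrite normrN.
Qed.

Lemma bounded_measurableM f g : bounded_measurable f -> bounded_measurable g ->
  bounded_measurable (fun t => f t * g t).
Proof.
move=> [mf [M hM]] [mg [N hN]]; split; first exact: measurable_funM.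
by exists (M * N) => t; rewrite normrM; apply: ler_pM.
Qed.

Lemma bounded_measurableX2 f : bounded_measurable f ->
  bounded_measurable (fun t => f t ^+ 2).
Proof.
by move=> bf; under [X in bounded_measurable X]funext do rewrite expr2;
  exact: bounded_measurableM.
Qed.

Lemma bounded_measurable_sum (I : Type) (r : seq I) (Q : pred I) (F : I -> T -> R) :
  (forall i, Q i -> bounded_measurable (F i)) ->
  bounded_measurable (fun t => \sum_(i <- r | Q i) F i t).
Proof.
move=> bF; elim: r => [|a r IH].
  by under [X in bounded_measurable X]funext do rewrite big_nil;
    exact: bounded_measurable_cst.
under [X in bounded_measurable X]funext do rewrite big_cons.
by case: (boolP (Q a)) => Qa //; exact: bounded_measurableD (bF _ Qa) IH.
Qed.

Lemma bounded_measurable_sqrt f : bounded_measurable f ->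
  bounded_measurable (fun t => Num.sqrt (f t)).
Proof.
move=> [mf [M hM]]; split.
  by apply: measurableT_comp => //;
    exact: continuous_measurable_fun (@sqrt_continuous R).
exists (1 + M) => t; rewrite ger0_norm ?sqrtr_ge0 //.
have M_ge0 : 0 <= M by apply: le_trans (hM t).
have ft_le : f t <= (1 + M) ^+ 2.
  by apply: le_trans (ler_norm _) _; apply: le_trans (hM t) _; nra.
by apply: le_trans (ler_wsqrtr ft_le) _; rewrite sqrtr_sqr ger0_norm //; lra.
Qed.

Variable P : probability T R.

Lemma bounded_measurable_integrable f : bounded_measurable f ->
  P.-integrable setT (EFin \o f).
Proof.
move=> [mf [M hM]]; apply: measurable_bounded_integrable => //.
  exact: (le_lt_trans (probability_le1 P measurableT) (ltry _)).
exists M; split; first by rewrite num_real.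
by move=> N hN x _; apply: le_trans (hM x) _; exact: ltW.
Qed.

Lemma Rintegral_cst_probability (c : R) : Rintegral P setT (fun=> c) = c.
Proof.
rewrite Rintegral_cst // [X in c * X](_ : _ = 1) ?mulr1 //.
exact: (congr1 fine (probability_setT P)).
Qed.

Lemma RintegralD_bounded f g : bounded_measurable f -> bounded_measurable g ->
  Rintegral P setT (fun t => f t + g t) = Rintegral P setT f + Rintegral P setT g.
Proof. by move=> bf bg; apply: RintegralD => //; exact: bounded_measurable_integrable. Qed.

Lemma RintegralZl_bounded (c : R) f : bounded_measurable f ->
  Rintegral P setT (fun t => c * f t) = c * Rintegral P setT f.
Proof. by move=> bf; apply: RintegralZl => //; exact: bounded_measurable_integrable. Qed.

Lemma RintegralN_bounded f : bounded_measurable f ->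
  Rintegral P setT (fun t => - f t) = - Rintegral P setT f.
Proof.
move=> bf; rewrite -mulN1r -RintegralZl_bounded //.
by apply: eq_Rintegral => t _; rewrite mulN1r.
Qed.

Lemma Rintegral_sum_bounded (I : Type) (r : seq I) (Q : pred I) (F : I -> T -> R) :
  (forall i, Q i -> bounded_measurable (F i)) ->
  Rintegral P setT (fun t => \sum_(i <- r | Q i) F i t) =
  \sum_(i <- r | Q i) Rintegral P setT (F i).
Proof.
move=> bF; elim: r => [|a r IH].
  by under eq_Rintegral do rewrite big_nil; rewrite big_nil Rintegral_cst_probability.
under eq_Rintegral do rewrite big_cons; rewrite big_cons.
case: (boolP (Q a)) => Qa //.
by rewrite RintegralD_bounded ?IH //; [exact: bF | exact: bounded_measurable_sum].
Qed.

(* Jensen for the square, via [0 <= E[(f - E f)^2] = E[f^2] - (E f)^2]. *)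
Lemma sqr_Rintegral_le f : bounded_measurable f ->
  (Rintegral P setT f) ^+ 2 <= Rintegral P setT (fun t => f t ^+ 2).
Proof.
move=> bf; set c := Rintegral P setT f.
have bf2 := bounded_measurableX2 bf.
have bfc : bounded_measurable (fun t => - (2 * c) * f t).
  exact/bounded_measurableM/bf/bounded_measurable_cst.
have var_ge0 : 0 <= Rintegral P setT (fun t => (f t - c) ^+ 2).
  by apply: Rintegral_ge0 => t _; exact: sqr_ge0.
have var_eq : Rintegral P setT (fun t => (f t - c) ^+ 2) =
              Rintegral P setT (fun t => f t ^+ 2) - c ^+ 2.
  transitivity (Rintegral P setT (fun t => f t ^+ 2 + (- (2 * c) * f t + c ^+ 2))).
    by apply: eq_Rintegral => t _; ring.
  rewrite !RintegralD_bounded //; last 2 first.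
  - exact: bounded_measurable_cst.
  - exact/bounded_measurableD/bounded_measurable_cst.
  rewrite RintegralZl_bounded // Rintegral_cst_probability -/c.
  by move: (Rintegral _ _ _) => u; ring.
by move: var_ge0; rewrite var_eq subr_ge0.
Qed.

End bounded_measurable.

Lemma sum_sqr_ge_inv (R : realFieldType) (d : nat) (x : 'I_d -> R) : (0 < d)%N ->
  \sum_i x i = 1 -> d%:R^-1 <= \sum_i x i ^+ 2.
Proof.
move=> d_gt0 sum_x; set c := (d%:R : R)^-1.
have d_neq0 : (d%:R : R) != 0 by rewrite pnatr_eq0 -lt0n.
have dev_ge0 : 0 <= \sum_i (x i - c) ^+ 2 by apply: sumr_ge0 => i _; exact: sqr_ge0.
have dev_eq : \sum_i (x i - c) ^+ 2 =
              \sum_i x i ^+ 2 + (- (2 * c)) * \sum_i x i + c ^+ 2 *+ d.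
  rewrite mulr_sumr -[in c ^+ 2 *+ d](card_ord d) -sumr_const -!big_split /=.
  by apply: eq_bigr => i _; ring.
have c2d : c ^+ 2 *+ d = c by rewrite -mulr_natr expr2 -mulrA mulVf ?mulr1.
by move: dev_ge0; rewrite dev_eq sum_x mulr1 c2d; lra.
Qed.

Lemma amgm_sqrt (R : rcfType) (u v : R) : 0 <= u -> 0 <= v ->
  2 * (Num.sqrt u * Num.sqrt v) <= u + v.
Proof.
move=> u_ge0 v_ge0; rewrite -{2}(sqr_sqrtr u_ge0) -{2}(sqr_sqrtr v_ge0).
by move: (Num.sqrt u) (Num.sqrt v) => a b; have := sqr_ge0 (a - b); rewrite sqrrB; lra.
Qed.

Lemma mul_sqrD_sub1_ge0 (R : realFieldType) (D a M : R) : 0 < D -> D^-1 <= M ->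
  0 <= D * (a ^+ 2 + M) - 1.
Proof.
move=> D_gt0; rewrite -(ler_pM2l D_gt0) mulfV ?gt_eqF // => DM.
by have := mulr_ge0 (ltW D_gt0) (sqr_ge0 a); rewrite mulrDr; lra.
Qed.

Lemma B_dichotomy_real (R : rcfType) (D a M E : R) :
  2 <= D -> D^-1 <= M -> M <= E -> a ^+ 2 <= 1 - E ->
  1 - 4^-1 * (E - M) = 1 \/
  D^-1 * (1 + Num.sqrt (D - 1) * Num.sqrt (D * (a ^+ 2 + M) - 1)) < 1 - 4^-1 * (E - M).
Proof.
move=> D_ge2 DM ME aE; set x := a ^+ 2 + M.
have D_gt0 : 0 < D by lra.
have [x_eq1|x_neq1] := eqVneq x 1.
  left; have -> : E - M = 0 by move: x_eq1; rewrite /x; lra.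
  by rewrite mulr0 subr0.
right.
have x_lt1 : x < 1 by rewrite lt_neqAle x_neq1 /x; lra.
have Dx_ge1 : 0 <= D * x - 1 by exact: mul_sqrD_sub1_ge0.
have amgm : 2 * (Num.sqrt (D - 1) * Num.sqrt (D * x - 1)) <= (D - 1) + (D * x - 1).
  by apply: amgm_sqrt => //; lra.
have B2_le : D^-1 * (1 + Num.sqrt (D - 1) * Num.sqrt (D * x - 1)) <= (1 + x) / 2.
  rewrite -[(1 + x) / 2](mulKf (lt0r_neq0 D_gt0)) ler_pM2l ?invr_gt0 //; lra.
by apply: le_lt_trans B2_le _; rewrite /x in x_lt1 *; lra.
Qed.

Local Open Scope complex_scope.
Local Notation cRe := complex.Re.
Local Notation cIm := complex.Im.

Section density_matrices.
Variables (R : realType) (d : nat).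
Implicit Types (A : 'M[R[i]]_d) (z : R[i]).

Definition sqnormc z : R := cRe z ^+ 2 + cIm z ^+ 2.

Definition purity A : R := \sum_i \sum_k sqnormc (A i k).

Definition hermitian A := forall i j, A j i = (A i j)^*.

Lemma big_ord_supp1 (C : zmodType) (i : 'I_d) (F : 'I_d -> C) :
  (forall k, k != i -> F k = 0) -> \sum_k F k = F i.
Proof. by move=> F0; rewrite (bigD1 i) //= big1 ?addr0. Qed.

Lemma big_ord_supp2 (C : zmodType) (i j : 'I_d) (F : 'I_d -> C) : i != j ->
  (forall k, k != i -> k != j -> F k = 0) -> \sum_k F k = F i + F j.
Proof.
move=> ij F0; rewrite (bigD1 i) //= (bigD1 j) 1?eq_sym //=.
by rewrite big1 ?addr0 // => k /andP[]; exact: F0.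
Qed.

Lemma qformE A (v : 'cV[R[i]]_d) :
  (adjmx v *m A *m v) 0 0 = \sum_k \sum_l (v k 0)^* * A k l * v l 0.
Proof.
rewrite !mxE exchange_big /=; apply: eq_bigr => l _.
by rewrite !mxE big_distrl /=; apply: eq_bigr => k _; rewrite !mxE.
Qed.

Lemma psd_diag A i : psd A -> 0 <= A i i.
Proof.
move=> psdA; have := psdA (\col_k (if k == i then 1 else 0)).
rewrite qformE (big_ord_supp1 (i := i)) => [|k ki]; last first.
  by apply: big1 => l _; rewrite !mxE (negbTE ki) rmorph0 !mul0r.
rewrite (big_ord_supp1 (i := i)) => [|l li]; last by rewrite !mxE (negbTE li) mulr0.
by rewrite !mxE eqxx rmorph1 mul1r mulr1.
Qed.

Lemma psd_diag_real A i : psd A -> A i i = (cRe (A i i))%:C /\ 0 <= cRe (A i i).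
Proof. by move/(psd_diag i); case: (A i i) => p q; rewrite lecE /= => /andP[/eqP -> ->]. Qed.

Lemma psd_pair A i j (x y : R[i]) : psd A -> i != j ->
  0 <= x^* * A i i * x + x^* * A i j * y + y^* * A j i * x + y^* * A j j * y.
Proof.
move=> psdA ij; have := psdA (\col_k (if k == i then x else if k == j then y else 0)).
have vE k : k != i -> k != j -> (if k == i then x else if k == j then y else 0) = 0.
  by move=> /negbTE -> /negbTE ->.
rewrite qformE (big_ord_supp2 ij) => [|k ki kj]; last first.
  by apply: big1 => l _; rewrite !mxE (vE k) // rmorph0 !mul0r.
do 2![rewrite (big_ord_supp2 ij); last by move=> l li lj; rewrite !mxE (vE l) // mulr0].
by rewrite !mxE eqxx [j == i]eq_sym (negbTE ij) eqxx !addrA.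
Qed.

Lemma psd_hermitian A : psd A -> hermitian A.
Proof.
move=> psdA i j; case: (eqVneq i j) => [<-|ij].
  by case: (psd_diag_real i psdA) => -> _ /=; rewrite oppr0.
have h1 := psd_pair 1 1 psdA ij; have h2 := psd_pair 1 'i psdA ij.
have := psd_diag i psdA; have := psd_diag j psdA; move: h1 h2.
case: (A i i) => p q; case: (A i j) => a b; case: (A j i) => c e; case: (A j j) => r s.
rewrite !lecE /=; simpc => /andP[/eqP h1 _] /andP[/eqP h2 _] /andP[/eqP hs _] /andP[/eqP hq _].
by congr Complex; lra.
Qed.

Lemma quadratic_cs (p r m : R) : 0 <= p -> 0 <= r ->
  (forall l, 0 <= l ^+ 2 * p - 2 * l * m + m * r) ->
  (forall l, 0 <= l ^+ 2 * r - 2 * l * m + m * p) -> m <= p * r.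
Proof.
move=> p_ge0 r_ge0 F G; have := F 1; have := F r; have := G p.
case: (ltrgt0P r) => [r_gt0|r_lt0|->]; [nra|lra|].
case: (ltrgt0P p) => [p_gt0|p_lt0|->]; [nra|lra|lra].
Qed.

Lemma psd_sqnormc_le A i j : psd A -> sqnormc (A i j) <= cRe (A i i) * cRe (A j j).
Proof.
move=> psdA; case: (eqVneq i j) => [<-|ij].
  case: (psd_diag_real i psdA) => -> _.
  by rewrite /sqnormc /= expr0n addr0 expr2.
have ji : j != i by rewrite eq_sym.
have H l := psd_pair (Complex l 0) (- (A j i)) psdA ij.
have H' l := psd_pair (Complex l 0) (- (A i j)) psdA ji.
have := psd_diag i psdA; have := psd_diag j psdA; move: H H'.
rewrite (psd_hermitian psdA i j) /sqnormc.
case: (A i i) => p q; case: (A i j) => a b; case: (A j j) => r s.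
rewrite !lecE /= => H H' /andP[/eqP s0 r_ge0] /andP[/eqP q0 p_ge0]; subst q s.
by apply: quadratic_cs => // l; [move: (H l) | move: (H' l)]; simpc => /andP[_]; nra.
Qed.

Lemma psd_trace_Re A : psd A -> \tr A = 1 -> \sum_i cRe (A i i) = 1.
Proof.
move=> psdA; rewrite /mxtrace (eq_bigr (fun i => (cRe (A i i))%:C)).
  by rewrite -rmorph_sum => /(congr1 (@complex.Re R)).
by move=> i _; case: (psd_diag_real i psdA).
Qed.

Lemma density_sqnormc_le1 A i j : psd A -> \tr A = 1 -> sqnormc (A i j) <= 1.
Proof.
move=> psdA trA; apply: le_trans (psd_sqnormc_le i j psdA) _.
have diag_le1 k : cRe (A k k) <= 1.
  rewrite -(psd_trace_Re psdA trA) (bigD1 k) //= lerDl.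
  by apply: sumr_ge0 => l _; case: (psd_diag_real l psdA).
have := diag_le1 i; have := diag_le1 j.
by case: (psd_diag_real i psdA) => _; case: (psd_diag_real j psdA) => _; nra.
Qed.

Lemma sqnormc_le1_Re_Im z : sqnormc z <= 1 -> `|cRe z| <= 1 /\ `|cIm z| <= 1.
Proof.
rewrite /sqnormc; move: (cRe z) (cIm z) => u v h.
by rewrite !ler_norml; split; apply/andP; split; nra.
Qed.

Lemma density_purity_le1 A : psd A -> \tr A = 1 -> purity A <= 1.
Proof.
move=> psdA trA; apply: (@le_trans _ _ (\sum_i \sum_k cRe (A i i) * cRe (A k k))).
  by apply: ler_sum => i _; apply: ler_sum => k _; exact: psd_sqnormc_le.
under eq_bigr do rewrite -mulr_sumr.
by rewrite -mulr_suml psd_trace_Re // mulr1.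
Qed.

Lemma purity_ge_diag A : \sum_i cRe (A i i) ^+ 2 <= purity A.
Proof.
apply: ler_sum => i _; rewrite (bigD1 i) //= -[X in X <= _]addr0.
apply: lerD; first by rewrite lerDl sqr_ge0.
by apply: sumr_ge0 => k _; apply: addr_ge0; exact: sqr_ge0.
Qed.

Lemma hermitian_mulmx_diag A i : hermitian A ->
  (A *m A) i i = (\sum_k sqnormc (A i k))%:C.
Proof.
move=> hA; rewrite mxE rmorph_sum; apply: eq_bigr => k _; rewrite (hA i k) /sqnormc.
by case: (A i k) => a b; simpc; congr Complex; rewrite ?expr2; ring.
Qed.

Lemma hermitian_trace_sqr A : hermitian A -> \tr (A *m A) = (purity A)%:C.
Proof.
move=> hA; rewrite /mxtrace rmorph_sum.
by apply: eq_bigr => i _; exact: hermitian_mulmx_diag.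
Qed.

End density_matrices.

Lemma sqrtC_real (R : realType) (r : R) : 0 <= r -> sqrtC r%:C = (Num.sqrt r)%:C.
Proof.
move=> r_ge0; rewrite -[in LHS](sqr_sqrtr r_ge0) rmorphXn sqrCK //.
by rewrite lecR sqrtr_ge0.
Qed.

Section ensemble.
Variables (R : realType) (d : nat) (dT : measure_display) (T : measurableType dT).
Variables (P : probability T R) (rho : T -> 'M[R[i]]_d).
Hypothesis rho_meas : forall i j : 'I_d,
  measurable_fun setT (fun t => cRe (rho t i j)) /\
  measurable_fun setT (fun t => cIm (rho t i j)).
Hypothesis rho_S : forall t, density_ops (rho t).

Local Notation E f := (Rintegral P setT f).
Local Notation mean_purity := (E (fun t => purity (rho t))).
Local Notation mean_mixedness := (E (fun t => Num.sqrt (1 - purity (rho t)))).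

Let psd_rho t : psd (rho t). Proof. by case: (rho_S t). Qed.
Let tr_rho t : \tr (rho t) = 1. Proof. by case: (rho_S t). Qed.

Lemma Ec_real (h : T -> R) : Ec P (fun t => (h t)%:C) = (E h)%:C.
Proof. by rewrite /Ec /= Rintegral_cst_probability. Qed.

Lemma EmxE (F : T -> 'M[R[i]]_d) i j : Emx P F i j = Ec P (fun t => F t i j).
Proof. by rewrite mxE. Qed.

Lemma bounded_measurable_Re i j : bounded_measurable (fun t => cRe (rho t i j)).
Proof.
split; first by case: (rho_meas i j).
by exists 1 => t; case: (sqnormc_le1_Re_Im (density_sqnormc_le1 i j (psd_rho t) (tr_rho t))).
Qed.

Lemma bounded_measurable_Im i j : bounded_measurable (fun t => cIm (rho t i j)).
Proof.
split; first by case: (rho_meas i j).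
by exists 1 => t; case: (sqnormc_le1_Re_Im (density_sqnormc_le1 i j (psd_rho t) (tr_rho t))).
Qed.

Lemma bounded_measurable_sqnormc i j : bounded_measurable (fun t => sqnormc (rho t i j)).
Proof.
by apply: bounded_measurableD; apply: bounded_measurableX2;
  [exact: bounded_measurable_Re | exact: bounded_measurable_Im].
Qed.

Lemma bounded_measurable_purity : bounded_measurable (fun t => purity (rho t)).
Proof.
by do 2![apply: bounded_measurable_sum => ? _]; exact: bounded_measurable_sqnormc.
Qed.

Lemma Emx_hermitian : hermitian (Emx P rho).
Proof.
move=> i j; rewrite !EmxE /Ec /= -RintegralN_bounded; last exact: bounded_measurable_Im.
by congr Complex; apply: eq_Rintegral => t _;
  rewrite (psd_hermitian (psd_rho t) i j); case: (rho t i j).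
Qed.

Lemma trace_Emx_sqr : \tr (Emx P (fun t => rho t *m rho t)) = mean_purity%:C.
Proof.
rewrite /mxtrace Rintegral_sum_bounded => [|i _]; last first.
  by apply: bounded_measurable_sum => k _; exact: bounded_measurable_sqnormc.
rewrite rmorph_sum; apply: eq_bigr => i _; rewrite EmxE.
have -> : (fun t => (rho t *m rho t) i i) = fun t => (\sum_k sqnormc (rho t i k))%:C.
  by apply: funext => t; apply: hermitian_mulmx_diag; exact: psd_hermitian.
exact: Ec_real.
Qed.

Lemma bounded_measurable_mixedness :
  bounded_measurable (fun t => Num.sqrt (1 - purity (rho t))).
Proof.
apply/bounded_measurable_sqrt/bounded_measurableD; first exact: bounded_measurable_cst.
exact/bounded_measurableN/bounded_measurable_purity.
Qed.

Lemma Ec_sqrt_mixedness :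
  Ec P (fun t => sqrtC (1 - \tr (rho t *m rho t))) = mean_mixedness%:C.
Proof.
have -> : (fun t => sqrtC (1 - \tr (rho t *m rho t))) =
          fun t => (Num.sqrt (1 - purity (rho t)))%:C.
  apply: funext => t; rewrite hermitian_trace_sqr; last exact: psd_hermitian.
  rewrite -(rmorph1 (real_complex R)) -rmorphB sqrtC_real // subr_ge0.
  exact: density_purity_le1.
exact: Ec_real.
Qed.

Lemma purity_Emx_ge_inv : (0 < d)%N -> d%:R^-1 <= purity (Emx P rho).
Proof.
move=> d_gt0; apply: le_trans (purity_ge_diag _); apply: sum_sqr_ge_inv => //.
under eq_bigr do rewrite EmxE /=.
rewrite -Rintegral_sum_bounded => [|i _]; last exact: bounded_measurable_Re.
rewrite -[RHS](Rintegral_cst_probability P 1); apply: eq_Rintegral => t _.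
exact: psd_trace_Re.
Qed.

Lemma purity_Emx_le : purity (Emx P rho) <= mean_purity.
Proof.
rewrite /purity Rintegral_sum_bounded => [|i _]; last first.
  by apply: bounded_measurable_sum => k _; exact: bounded_measurable_sqnormc.
apply: ler_sum => i _; rewrite Rintegral_sum_bounded => [|k _]; last first.
  exact: bounded_measurable_sqnormc.
apply: ler_sum => k _; rewrite EmxE /sqnormc /= RintegralD_bounded; last 2 first.
- exact/bounded_measurableX2/bounded_measurable_Re.
- exact/bounded_measurableX2/bounded_measurable_Im.
by apply: lerD; apply: sqr_Rintegral_le;
  [exact: bounded_measurable_Re | exact: bounded_measurable_Im].
Qed.

Lemma sqr_mean_mixedness_le : mean_mixedness ^+ 2 <= 1 - mean_purity.
Proof.
apply: le_trans (sqr_Rintegral_le P bounded_measurable_mixedness) _.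
have -> : E (fun t => Num.sqrt (1 - purity (rho t)) ^+ 2) = E (fun t => 1 - purity (rho t)).
  by apply: eq_Rintegral => t _; rewrite sqr_sqrtr // subr_ge0 density_purity_le1.
rewrite RintegralD_bounded ?RintegralN_bounded ?Rintegral_cst_probability //.
- exact: bounded_measurable_purity.
- exact: bounded_measurable_cst.
- exact/bounded_measurableN/bounded_measurable_purity.
Qed.

Lemma B1E : B1 P rho = (1 - 4^-1 * (mean_purity - purity (Emx P rho)))%:C.
Proof.
rewrite /B1 linearB /= trace_Emx_sqr hermitian_trace_sqr; last exact: Emx_hermitian.
rewrite !rmorphB rmorph1 rmorphM fmorphV rmorph_nat.
by rewrite (rmorphB (real_complex R)).
Qed.

Lemma B2E : (0 < d)%N ->
  B2 P rho = (d%:R^-1 * (1 + Num.sqrt (d%:R - 1) *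
    Num.sqrt (d%:R * (mean_mixedness ^+ 2 + purity (Emx P rho)) - 1)))%:C.
Proof.
move=> d_gt0; set a := mean_mixedness; set M := purity (Emx P rho).
have dR_gt0 : (0 : R) < d%:R by rewrite ltr0n.
have dx_ge1 : 0 <= d%:R * (a ^+ 2 + M) - 1.
  exact/mul_sqrD_sub1_ge0/purity_Emx_ge_inv.
have dpred : ((d.-1)%:R : R[i]) = (d%:R - 1 : R)%:C.
  by rewrite rmorphB rmorph1 rmorph_nat -subn1 natrB.
have dx : (d%:R : R[i]) * (a%:C ^+ 2 + M%:C) - 1 = (d%:R * (a ^+ 2 + M) - 1 : R)%:C.
  by rewrite rmorphB rmorphM rmorphD rmorphXn rmorph_nat rmorph1.
rewrite /B2 Ec_sqrt_mixedness hermitian_trace_sqr; last exact: Emx_hermitian.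
rewrite dpred dx (sqrtC_real dx_ge1) sqrtC_real ?subr_ge0 ?ler1n //.
by rewrite rmorphM rmorphD rmorph1 rmorphM fmorphV rmorph_nat.
Qed.

End ensemble.

Unset Implicit Arguments.
Theorem corollary2 (R : realType) (d : nat) (hd : (2 <= d)%N)
  (dT : measure_display) (T : measurableType dT) (P : probability T R)
  (rho : T -> 'M[R[i]]_d)
  (rho_meas : forall i j : 'I_d,
     measurable_fun setT (fun t => complex.Re (rho t i j)) /\
     measurable_fun setT (fun t => complex.Im (rho t i j)))
  (rho_S : forall t, @density_ops R d (rho t)) :
  B1 P rho = 1 \/ B2 P rho < B1 P rho.
Proof.
have d_gt0 : (0 < d)%N by exact: leq_trans hd.
have d_ge2 : (2 : R) <= d%:R by rewrite (ler_nat R 2 d).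
rewrite (B1E P rho_meas rho_S) (B2E P rho_meas rho_S d_gt0).
have [B1_eq1|B2_lt_B1] := B_dichotomy_real d_ge2
  (purity_Emx_ge_inv P rho_meas rho_S d_gt0) (purity_Emx_le P rho_meas rho_S)
  (sqr_mean_mixedness_le P rho_meas rho_S).
- by left; rewrite B1_eq1.
- by right; rewrite ltcR.
Qed.
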